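(* Let $t_1<\dots<t_N$, $q_1,\dots,q_N\ge0$, and let $\tau$ be the distribution of an offer profile subject to $((q_1,\dots,q_N),(t_1,\dots,t_N))$ (so in particular $\tau(\mathbb R)=\sum_k q_k$ and $\int t\,d\tau(t)=\sum_k q_kt_k$). Then the recursive procedure $FEASIBLE((q_1,\dots,q_N),(t_1,\dots,t_N),\tau)$ always stops, i.e. it terminates after finitely many recursive calls.
   Context: Drivers form a measure space $(I,di)$ of total mass $\sum_k q_k$; an offer profile subject to $(\mathbf q,\mathbf t)$ is a measurable $T:I\to[t_1,t_N]$ with $\int_I T_i\,di=\sum_k q_kt_k$; its distribution is $\tau(B)=di(\{i:T_i\in B\})$. The procedure $FEASIBLE(\mathbf q,\mathbf t,\tau)$, for $N\ge0$, reals $t_1<\dots<t_N$, $q_1,\dots,q_N\ge0$ and a finite Borel measure $\tau$ on $\mathbb R$, returns a Boolean computed as follows. Set $t_{N+1}=+\infty$, $q_{N+1}=0$. (1) If $\tau((-\infty,t_1))>0$, return FALSE. (2) Else if $N=0$, return TRUE. (3) Else if $\tau([t_1,t_N])=0$, return TRUE. (4) Otherwise let $n$ be the smallest integer with $\tau([t_n,t_{n+1}])>0$. (4a) If $q_1=0$, return $FEASIBLE((q_2,\dots,q_N),(t_2,\dots,t_N),\tau)$. (4b) Else if $q_{n+1}=0$ and $N>1$, return $FEASIBLE$ applied to the vectors with the $(n+1)$-th entries removed and the same $\tau$. (4c) Otherwise define, for $t\in[t_n,t_{n+1}]$, $\alpha_1(t)=\frac{t_{n+1}-t}{t_{n+1}-t_1}$,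 $\alpha_{n+1}(t)=\frac{t-t_1}{t_{n+1}-t_1}$; for $m\ge0$ let $t^m=\inf\{t:\tau([t_n,t])>m\}$, $\tau^m=\tau|_{[t_n,t^m)}+(m-\tau([t_n,t^m)))\delta_{t^m}$, $J_1(m)=\int\alpha_1\,d\tau^m$, $J_{n+1}(m)=\int\alpha_{n+1}\,d\tau^m$; let $M=\tau([t_n,t_{n+1}])$, $M_1=\sup\{m\le M:J_1(m)<q_1\}$, $M_{n+1}=\sup\{m\le M:J_{n+1}(m)<q_{n+1}\}$, $M_{min}=\min\{M_1,M_{n+1}\}$; return $FEASIBLE((q_1-J_1(M_{min}),q_2,\dots,q_n,q_{n+1}-J_{n+1}(M_{min}),q_{n+2},\dots,q_N),(t_1,\dots,t_N),\tau-\tau^{M_{min}})$. *)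

From mathcomp Require Import all_boot all_order all_algebra.
From mathcomp Require Import all_classical all_reals all_analysis.
Set Implicit Arguments. Unset Strict Implicit. Unset Printing Implicit Defensive.
Import Order.TTheory GRing.Theory Num.Theory.
Local Open Scope ring_scope.
Local Open Scope classical_set_scope.

(* A state of the procedure FEASIBLE(q, t, tau).  Indices are 0-based:
   q`_k is q_{k+1} and t`_k is t_{k+1} of the paper; N = size t. *)
Record state (R : realType) := State {
  st_q : seq R;
  st_t : seq R;
  st_tau : {measure set R -> \bar R} }.

Section Feasible.
Variable R : realType.

Definition rem_at (i : nat) (s : seq R) : seq R := take i s ++ drop i.+1 s.

(* the interval [t_n, t_{n+1}] of the paper with t_{N+1} = +oo,
   for the 0-based index j = n - 1 *)
Definition cell (t : seq R) (j : nat) : set R :=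
  if (j.+1 < size t)%N then `[t`_j, t`_j.+1]%classic else `[t`_j, +oo[%classic.

(* The procedure reaches step (4): N >= 1, not (1), not (3). *)
Definition reaches4 (s : state R) : Prop :=
  let t := st_t s in let tau := st_tau s in
  (0 < size t)%N /\ tau `]-oo, t`_0[%classic = 0%E /\
  tau `[t`_0, t`_(size t).-1]%classic != 0%E.

(* j = n - 1 where n is the smallest integer with tau([t_n,t_{n+1}]) > 0 *)
Definition first_cell (s : state R) (j : nat) : Prop :=
  (j < size (st_t s))%N /\ (0 < st_tau s (cell (st_t s) j))%E /\
  forall k, (k < j)%N -> ~ (0 < st_tau s (cell (st_t s) k))%E.

(* ---- step (4c); c = t_n, a = t_1, b = t_{n+1} ---- *)
Section Step4c.
Variable tau : {measure set R -> \bar R}.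
Variables (a b c : R).

Definition alpha1 (x : R) : R := (b - x) / (b - a).
Definition alphan1 (x : R) : R := (x - a) / (b - a).

(* t^m = inf {t : tau([t_n, t]) > m}, in the extended reals (inf of the
   empty set is +oo) *)
Definition tpt (m : R) : \bar R :=
  ereal_inf [set x%:E | x in [set x : R | (m%:E < tau `[c, x]%classic)%E]].

Definition Iv (e : \bar R) : set R :=
  match e with
  | r%:E => `[c, r[%classic
  | +oo%E => `[c, +oo[%classic
  | -oo%E => set0
  end.

Definition atomw (m : R) : R := m - fine (tau (Iv (tpt m))).

(* tau^m = tau|_[t_n, t^m) + (m - tau([t_n,t^m))) delta_{t^m}
   (no atom when t^m = +oo, in which case its weight is 0 anyway) *)
Definition taum (m : R) (A : set R) : \bar R :=
  (tau (A `&` Iv (tpt m)) +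
   match tpt m with
   | r%:E => (if `[< A r >] then (atomw m)%:E else 0%E)
   | _ => 0%E
   end)%E.

(* J(m) = int alpha d tau^m *)
Definition Jint (alpha : R -> R) (m : R) : R :=
  fine (\int[tau]_(x in Iv (tpt m)) (alpha x)%:E)%E +
  match tpt m with
  | r%:E => atomw m * alpha r
  | _ => 0
  end.

End Step4c.

Definition Mtot (s : state R) (j : nat) : R := fine (st_tau s (cell (st_t s) j)).

Definition J1 (s : state R) (j : nat) : R -> R :=
  let t := st_t s in
  Jint (st_tau s) t`_j (alpha1 t`_0 t`_j.+1).
Definition Jn1 (s : state R) (j : nat) : R -> R :=
  let t := st_t s in
  Jint (st_tau s) t`_j (alphan1 t`_0 t`_j.+1).

Definition M1 (s : state R) (j : nat) : R :=
  sup [set m : R | 0 <= m <= Mtot s j /\ J1 s j m < (st_q s)`_0].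
Definition Mn1 (s : state R) (j : nat) : R :=
  sup [set m : R | 0 <= m <= Mtot s j /\ Jn1 s j m < (st_q s)`_j.+1].
Definition Mmin (s : state R) (j : nat) : R := Num.min (M1 s j) (Mn1 s j).

Definition q4c (s : state R) (j : nat) : seq R :=
  let q := st_q s in
  set_nth 0 (set_nth 0 q 0 (q`_0 - J1 s j (Mmin s j)))
          j.+1 (q`_j.+1 - Jn1 s j (Mmin s j)).

(* Call s s' : running FEASIBLE on s makes the recursive call FEASIBLE(s').
   (The new measure tau - tau^{M_min} is given by any measure agreeing with
   it on Borel sets.) *)
Inductive Call (s : state R) : state R -> Prop :=
| Call4a j : reaches4 s -> first_cell s j -> (st_q s)`_0 = 0 ->
    Call s (State (behead (st_q s)) (behead (st_t s)) (st_tau s))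
| Call4b j : reaches4 s -> first_cell s j -> (st_q s)`_0 != 0 ->
    (st_q s)`_j.+1 = 0 -> (1 < size (st_t s))%N ->
    Call s (State (rem_at j.+1 (st_q s)) (rem_at j.+1 (st_t s)) (st_tau s))
| Call4c j (tau' : {measure set R -> \bar R}) :
    reaches4 s -> first_cell s j -> (st_q s)`_0 != 0 ->
    ~ ((st_q s)`_j.+1 = 0 /\ (1 < size (st_t s))%N) ->
    (j.+1 < size (st_t s))%N ->
    (forall A, measurable A ->
       tau' A = (st_tau s A - taum (st_tau s) (st_t s)`_j (Mmin s j) A)%E) ->
    Call s (State (q4c s j) (st_t s) tau').

Definition terminates (s : state R) : Prop := Acc (fun s' s0 => Call s0 s') s.

End Feasible.

From mathcomp Require Import all_boot all_order all_algebra.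
From mathcomp Require Import all_classical all_reals all_analysis.
From mathcomp Require Import measurable_realfun ring lra zify.

Set Implicit Arguments.
Unset Strict Implicit.
Unset Printing Implicit Defensive.
Import Order.TTheory GRing.Theory Num.Theory.
Local Open Scope ring_scope.
Local Open Scope classical_set_scope.

(* Calls (4a) and (4b) shorten the vectors q and t.  A call (4c) keeps them and keeps the
   cells [t_k, t_(k+1)] before the first charged cell [t_n, t_(n+1)] null.  The functions
   J_1 and J_(n+1) vanish at 0 and are nondecreasing and 1-Lipschitz on [0, M], so at
   M_min = min(M_1, M_(n+1)) either M_min = M, and then tau^M coincides with tau on
   [t_n, t_(n+1)], which the call empties; or J_1(M_min) = q_1 or J_(n+1)(M_min) = q_(n+1),
   and then the next call is (4a) or (4b).  Hence within at most two calls either N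
   decreases or the number of leading null cells increases. *)

Section FiniteMeasure.
Context d (T : measurableType d) (R : realType) (mu : {measure set T -> \bar R}).

Lemma measure_bigcup_le (F : nat -> set T) (m : \bar R) :
  (forall n, measurable (F n)) -> nondecreasing_seq F ->
  (forall n, (mu (F n) <= m)%E) -> (mu (\bigcup_n F n) <= m)%E.
Proof.
move=> mF ndF Fm.
have cvgF := nondecreasing_cvg_mu (mu := mu) mF (bigcupT_measurable _ mF) ndF.
rewrite -(cvg_lim _ cvgF) //; apply: lime_le; first exact: cvgP cvgF.
exact: nearW.
Qed.

Hypothesis mu_fin : (mu setT < +oo)%E.

Lemma measure_fin_num A : measurable A -> mu A \is a fin_num.
Proof.
move=> mA; rewrite ge0_fin_numE ?measure_ge0 //.
by apply: le_lt_trans mu_fin; apply: le_measure; rewrite ?inE.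
Qed.

Lemma measure_bigcap_ge (F : nat -> set T) (m : \bar R) :
  (forall n, measurable (F n)) -> nonincreasing_seq F ->
  (forall n, (m <= mu (F n))%E) -> (m <= mu (\bigcap_n F n))%E.
Proof.
move=> mF niF Fm.
have F0 : (mu (F 0%N) < +oo)%E by rewrite -ge0_fin_numE ?measure_fin_num.
have cvgF := nonincreasing_cvg_mu (mu := mu) F0 mF (bigcapT_measurable mF) niF.
rewrite -(cvg_lim _ cvgF) //; apply: lime_ge; first exact: cvgP cvgF.
exact: nearW.
Qed.

End FiniteMeasure.

Section ItvSplit.
Context {R : realType}.
Implicit Types (a b x : itv_bound R) (c r : R).

Lemma setI_itv_adjacent a x b :
  [set` Interval a x] `&` [set` Interval x b] = set0.
Proof.
apply/seteqP; split => // z [] /=; rewrite !itv_boundlr => /andP[_ zx] /andP[xz _].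
by have := le_trans zx xz; rewrite bnd_simp ltxx.
Qed.

Lemma setI_itvco1 c r : `[c, r[ `&` [set r] = set0.
Proof. by rewrite -set_itv1 setI_itv_adjacent. Qed.

End ItvSplit.

Lemma sup_sublevel (R : realType) (f : R -> R) (M q : R) :
  0 <= M -> 0 < q -> f 0 = 0 ->
  (forall m m', 0 <= m -> m <= m' -> m' <= M -> 0 <= f m' - f m <= m' - m) ->
  let s := sup [set m | 0 <= m <= M /\ f m < q] in
  [/\ 0 <= s, s <= M, f s <= q & (s < M -> f s = q)].
Proof.
move=> M0 q0 f0 lip s; set E := [set m | 0 <= m <= M /\ f m < q].
have E0 : E 0 by split; [rewrite lexx M0 | rewrite f0].
have ubM : ubound E M by move=> x [/andP[_ ->]].
have supE : has_sup E by split; [exists 0 | exists M].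
have s0 : 0 <= s by apply: sup_upper_bound.
have sM : s <= M by apply: ge_sup => //; exists 0.
have fsq : f s <= q.
  rewrite leNgt; apply/negP => qfs.
  have fsq0 : 0 < f s - q by rewrite subr_gt0.
  have [e [/andP[e0 eM] fe] se] := sup_adherent fsq0 supE.
  have es : e <= s by apply: sup_upper_bound => //; split; [rewrite e0 eM|].
  have /andP[_ fse] := lip e s e0 es sM.
  rewrite -/s in se; lra.
split => // sM'.
apply/eqP; rewrite eq_le fsq /= leNgt; apply/negP => fsq'.
set d := Num.min (q - f s) (M - s).
have d0 : 0 < d by rewrite lt_min !subr_gt0 fsq' sM'.
have d1 : d <= q - f s by rewrite ge_min lexx.
have d2 : d <= M - s by rewrite ge_min lexx orbT.
have Ey : E (s + d / 2).
  have l1 : s <= s + d / 2 by lra.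
  have l2 : s + d / 2 <= M by lra.
  have /andP[_ fsd] := lip s (s + d / 2) s0 l1 l2.
  by split; [apply/andP; split|]; lra.
by have := sup_upper_bound supE Ey; rewrite -/s; lra.
Qed.

Section Quantile.
Context (R : realType) (tau : {measure set R -> \bar R}) (c : R).
Hypothesis tau_fin : (tau setT < +oo)%E.
Let fin := measure_fin_num tau_fin.

Local Notation tpt := (tpt tau c).

Lemma tpt_le m x : (m%:E < tau `[c, x])%E -> (tpt m <= x%:E)%E.
Proof. by move=> mx; apply: ereal_inf_lbound; exists x. Qed.

Lemma lt_tpt_measure_le m x : (x%:E < tpt m)%E -> (tau `[c, x] <= m%:E)%E.
Proof. by move=> xm; rewrite leNgt; apply/negP => /tpt_le; rewrite leNgt xm. Qed.

Lemma tpt_lt_measure_gt m x : (tpt m < x%:E)%E -> (m%:E < tau `[c, x])%E.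
Proof.
move=> /ereal_inf_lt [_ [z mz <-]] zx; apply: (lt_le_trans mz).
apply: le_measure; rewrite ?inE; try exact: measurable_itv.
by apply: subset_itvl; rewrite bnd_simp -lee_fin ltW.
Qed.

Lemma tpt_ge m : 0 <= m -> (c%:E <= tpt m)%E.
Proof.
move=> m0; apply: le_ereal_inf_tmp => _ [z mz <-]; rewrite lee_fin leNgt.
apply/negP => zc; have cz0 : `[c, z] = set0.
  by apply/seteqP; split => // x /=; rewrite in_itv /= => /andP[cx /(le_trans cx)];
    rewrite leNgt zc.
by move: mz; rewrite /= cz0 measure0 lte_fin ltNge m0.
Qed.

Lemma le_tpt m m' : m <= m' -> (tpt m <= tpt m')%E.
Proof.
move=> mm'; apply: ereal_inf_le_tmp => _ [z mz <-]; exists z => //=.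
by apply: le_lt_trans mz; rewrite lee_fin.
Qed.

(* [c, t^m) is exhausted by the [c, t^m - 1/(n+1)], each of measure at most m *)
Lemma measure_co_tpt_le m r : tpt m = r%:E -> (tau `[c, r[ <= m%:E)%E.
Proof.
move=> tr.
have -> : `[c, r[ = \bigcup_n `[c, r - n.+1%:R^-1].
  apply/seteqP; split => x /=.
    rewrite in_itv /= => /andP[cx xr].
    have [k hk] := ltr_add_invr xr; exists k => //=.
    by rewrite in_itv /= cx /= lerBrDr ltW.
  move=> [k _] /=; rewrite !in_itv /= => /andP[-> h] /=.
  by apply: (le_lt_trans h); rewrite ltrBlDr ltrDl invr_gt0 ltr0n.
apply: measure_bigcup_le => [n|n k nk|n]; first exact: measurable_itv.
  apply/subsetPset; apply: subset_itvl.
  by rewrite bnd_simp lerB // lef_pV2 ?posrE ?ltr0n // ler_nat.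
by apply: lt_tpt_measure_le; rewrite tr lte_fin ltrBlDr ltrDl invr_gt0 ltr0n.
Qed.

Lemma measure_cy_tpt_le m : tpt m = +oo%E -> (tau `[c, +oo[ <= m%:E)%E.
Proof.
move=> tr.
have -> : `[c, +oo[ = \bigcup_n `[c, c + n%:R].
  apply/seteqP; split => x /=.
    rewrite in_itv /= andbT => cx.
    exists (Num.Def.archi_bound (x - c)) => //=.
    rewrite in_itv /= cx /= -lerBlDl; apply: ltW.
    by apply: archi_boundP; rewrite subr_ge0.
  by move=> [k _] /=; rewrite !in_itv /= andbT => /andP[].
apply: measure_bigcup_le => [n|n k nk|n]; first exact: measurable_itv.
  by apply/subsetPset; apply: subset_itvl; rewrite bnd_simp lerD2l ler_nat.
by apply: lt_tpt_measure_le; rewrite tr ltry.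
Qed.

(* [c, t^m] is the intersection of the [c, t^m + 1/(n+1)], each of measure > m *)
Lemma measure_cc_tpt_ge m r : tpt m = r%:E -> (m%:E <= tau `[c, r])%E.
Proof.
move=> tr.
have -> : `[c, r] = \bigcap_n `[c, r + n.+1%:R^-1].
  apply/seteqP; split => x /=.
    rewrite in_itv /= => /andP[cx xr] k _ /=.
    by rewrite in_itv /= cx /= (le_trans xr) // lerDl invr_ge0.
  move=> h; rewrite in_itv /=.
  have := h 0%N I; rewrite /= in_itv /= => /andP[-> _] /=.
  rewrite leNgt; apply/negP => rx.
  have [k hk] := ltr_add_invr rx.
  by have := h k I; rewrite /= in_itv /= => /andP[_]; rewrite leNgt hk.
apply: (measure_bigcap_ge tau_fin) => [n|n k nk|n]; first exact: measurable_itv.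
  apply/subsetPset; apply: subset_itvl.
  by rewrite bnd_simp lerD2l lef_pV2 ?posrE ?ltr0n // ler_nat.
by apply/ltW/tpt_lt_measure_gt; rewrite tr lte_fin ltrDl invr_gt0 ltr0n.
Qed.

Lemma atomw_ge0 m r : tpt m = r%:E -> 0 <= atomw tau c m.
Proof.
move=> tr; rewrite /atomw tr /= subr_ge0 -lee_fin fineK; first exact: measure_co_tpt_le tr.
exact: fin (measurable_itv _).
Qed.

Lemma taum_ge0 m A : measurable A -> (0 <= taum tau c m A)%E.
Proof.
move=> mA; apply: adde_ge0; first exact: measure_ge0.
case tr: (tpt m) => [r| |] //; case: ifP => // _.
by rewrite lee_fin (atomw_ge0 tr).
Qed.

Lemma taum_fin_num m A : measurable A -> taum tau c m A \is a fin_num.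
Proof.
move=> mA; rewrite /taum fin_numD; apply/andP; split; last first.
  by case: (tpt m) => [r| |] //; case: ifP.
have mIv : measurable (Iv c (tpt m)).
  by case: (tpt m) => [r| |] /=; [exact: measurable_itv..| exact: measurable0].
exact: fin (measurableI _ _ mA mIv).
Qed.

(** * The functions J *)

Definition mass (A : set R) : R := fine (tau A).

Lemma mass_setU A B : measurable A -> measurable B -> A `&` B = set0 ->
  mass (A `|` B) = mass A + mass B.
Proof. by move=> mA mB AB; rewrite /mass measureU // fineD ?fin. Qed.

Lemma le_mass A B : measurable A -> measurable B -> A `<=` B -> mass A <= mass B.
Proof. by move=> mA mB AB; rewrite /mass fine_le ?fin //; apply: le_measure; rewrite ?inE. Qed.

Variables (b : R) (alpha : R -> R).
Hypothesis alpha_meas : measurable_fun setT alpha.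
Hypothesis alpha01 : forall x, c <= x <= b -> 0 <= alpha x <= 1.

Definition wmass (A : set R) : R := fine (\int[tau]_(x in A) (alpha x)%:E)%E.

Let alphaE_meas A : measurable A -> measurable_fun A (fun x => (alpha x)%:E).
Proof. by move=> mA; apply/measurable_EFinP; exact: measurable_funS alpha_meas. Qed.

Section InCell.
Variable A : set R.
Hypotheses (mA : measurable A) (Acb : A `<=` `[c, b]).

Let alpha_ge0 x : A x -> (0 <= (alpha x)%:E)%E.
Proof. by move=> /Acb; rewrite /= in_itv /= lee_fin => /alpha01 /andP[]. Qed.

Let alpha_le1 x : A x -> ((alpha x)%:E <= 1)%E.
Proof. by move=> /Acb; rewrite /= in_itv /= lee_fin => /alpha01 /andP[]. Qed.

Lemma integral_alpha_le_measure : (\int[tau]_(x in A) (alpha x)%:E <= tau A)%E.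
Proof.
rewrite -[leRHS]mul1e -integral_cst //.
apply: ge0_le_integral => //; by [exact: alphaE_meas | exact: alpha_le1 | exact: alpha_ge0].
Qed.

Lemma integral_alpha_fin_num : (\int[tau]_(x in A) (alpha x)%:E)%E \is a fin_num.
Proof.
rewrite ge0_fin_numE ?integral_ge0 //.
apply: le_lt_trans integral_alpha_le_measure _.
by rewrite -ge0_fin_numE ?fin.
Qed.

Lemma wmass_ge0 : 0 <= wmass A.
Proof. exact/fine_ge0/integral_ge0. Qed.

Lemma wmass_le_mass : wmass A <= mass A.
Proof.
by rewrite fine_le ?fin ?integral_alpha_fin_num ?integral_alpha_le_measure.
Qed.

End InCell.

Lemma wmass_setU A B : measurable A -> measurable B -> A `&` B = set0 ->
  A `<=` `[c, b] -> B `<=` `[c, b] -> wmass (A `|` B) = wmass A + wmass B.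
Proof.
move=> mA mB AB Acb Bcb; rewrite /wmass integral_setU //.
- by rewrite fineD // integral_alpha_fin_num.
- by apply: alphaE_meas; exact: measurableU.
- by rewrite disj_set2E AB.
Qed.

Lemma wmass_set1 x : wmass [set x] = alpha x * mass [set x].
Proof.
rewrite /wmass (eq_integral (fun=> (alpha x)%:E)); last by move=> y /[!inE] ->.
by rewrite integral_cst //= fineM ?fin.
Qed.

(* J(m) when t^m = r *)
Definition Jat (r m : R) : R := wmass `[c, r[ + (m - mass `[c, r[) * alpha r.

Lemma mass_itvcc r : c <= r -> mass `[c, r] = mass `[c, r[ + mass [set r].
Proof.
by move=> cr; rewrite -(@setUitv1 _ _ _ _ true) ?bnd_simp // mass_setU ?setI_itvco1.
Qed.

Let itvco_split r r' : c <= r -> r < r' -> `[c, r'[ = `[c, r] `|` `]r, r'[.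
Proof. by move=> cr rr'; apply: itv_bndbnd_setU; rewrite bnd_simp. Qed.

Lemma mass_itvco_split r r' : c <= r -> r < r' ->
  mass `[c, r'[ = mass `[c, r[ + mass [set r] + mass `]r, r'[.
Proof.
move=> cr rr'; rewrite (itvco_split cr rr') mass_setU ?mass_itvcc ?setI_itv_adjacent //;
  exact: measurable_itv.
Qed.

Lemma wmass_itvco_split r r' : c <= r -> r < r' -> r' <= b ->
  wmass `[c, r'[ = wmass `[c, r[ + alpha r * mass [set r] + wmass `]r, r'[.
Proof.
move=> cr rr' r'b; have rb := ltW (lt_le_trans rr' r'b).
have sub_cr : `[c, r] `<=` `[c, b] by apply: subset_itv; rewrite bnd_simp.
have sub_rr' : `]r, r'[ `<=` `[c, b] by apply: subset_itv; rewrite bnd_simp.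
have sub_cr' : `[c, r[ `<=` `[c, b] by apply: subset_itv; rewrite bnd_simp.
have sub_r : [set r] `<=` `[c, b] by move=> x /= ->; rewrite in_itv /= cr.
rewrite (itvco_split cr rr') wmass_setU ?setI_itv_adjacent //; try exact: measurable_itv.
by rewrite -(@setUitv1 _ _ _ _ true) ?bnd_simp // wmass_setU ?setI_itvco1 ?wmass_set1.
Qed.

(* For r < r' the increment is x (F0 + F1 - m) + G2 + (m' - F0 - F1 - F2) y, with x, y the
   values of alpha at r, r', F0, F1, F2 the masses of [c, r), {r}, (r, r') and G2 <= F2 the
   weighted mass of (r, r'); each term is nonnegative and they add up to at most m' - m. *)
Lemma Jat_increment r r' m m' : c <= r -> r <= r' -> r' <= b -> m <= m' ->
  mass `[c, r[ <= m -> m <= mass `[c, r] -> mass `[c, r'[ <= m' ->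
  0 <= Jat r' m' - Jat r m <= m' - m.
Proof.
move=> cr rr' r'b mm' h1 h2 h3.
have /andP[x0 x1] : 0 <= alpha r <= 1 by apply: alpha01; rewrite cr (le_trans rr').
have /andP[y0 y1] : 0 <= alpha r' <= 1 by apply: alpha01; rewrite r'b (le_trans cr).
rewrite /Jat; have [<-|r_neq_r'] := eqVneq r r'.
  have e : m' - mass `[c, r[ - (m - mass `[c, r[) = m' - m by ring.
  rewrite opprD addrACA subrr add0r -mulrBl e.
  by rewrite mulr_ge0 ?subr_ge0 //= ler_piMr ?subr_ge0.
have {}rr' : r < r' by rewrite lt_neqAle r_neq_r'.
have sub_rr' : `]r, r'[ `<=` `[c, b].
  by apply: subset_itv; rewrite bnd_simp ?(le_trans cr) // ltW.
have g0 : 0 <= wmass `]r, r'[ by apply: wmass_ge0 => //; exact: measurable_itv.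
have g1 : wmass `]r, r'[ <= mass `]r, r'[.
  by apply: wmass_le_mass => //; exact: measurable_itv.
rewrite (wmass_itvco_split cr rr' r'b) (mass_itvco_split cr rr').
rewrite mass_itvcc // in h2; rewrite (mass_itvco_split cr rr') in h3.
move: h1 h2 h3 g0 g1 x0 x1 y0 y1.
set F0 := mass `[c, r[; set F1 := mass [set r]; set F2 := mass `]r, r'[.
set G0 := wmass `[c, r[; set G2 := wmass `]r, r'[.
set x := alpha r; set y := alpha r'.
move=> h1 h2 h3 g0 g1 x0 x1 y0 y1.
have /andP[p1 p1'] : 0 <= x * (F0 + F1 - m) <= F0 + F1 - m.
  by rewrite mulr_ge0 ?subr_ge0 //= ler_piMl ?subr_ge0.
have /andP[p2 p2'] : 0 <= (m' - (F0 + F1 + F2)) * y <= m' - (F0 + F1 + F2).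
  by rewrite mulr_ge0 ?subr_ge0 //= ler_piMr ?subr_ge0.
have -> : G0 + x * F1 + G2 + (m' - (F0 + F1 + F2)) * y - (G0 + (m - F0) * x) =
  x * (F0 + F1 - m) + G2 + (m' - (F0 + F1 + F2)) * y by ring.
apply/andP; split; lra.
Qed.

Hypothesis cb : c <= b.
Local Notation M := (mass `[c, b]).

Let measure_cell : tau `[c, b] = M%:E.
Proof. by rewrite fineK ?fin. Qed.

Let Jint_Jat m r : tpt m = r%:E -> Jint tau c alpha m = Jat r m.
Proof. by move=> tr; rewrite /Jint /atomw tr. Qed.

Lemma tpt_mass_ge : (b%:E <= tpt M)%E.
Proof. by rewrite leNgt; apply/negP => /tpt_lt_measure_gt; rewrite measure_cell ltxx. Qed.

Lemma tpt_in_cell m : 0 <= m < M ->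
  exists2 r, tpt m = r%:E & c <= r <= b.
Proof.
move=> /andP[m0 mM].
have := @tpt_le m b; rewrite measure_cell lte_fin => /(_ mM).
case: (tpt m) (tpt_ge m0) => [r| |] //= cr rb.
by exists r => //; move: cr rb; rewrite ?lee_fin => -> ->.
Qed.

Let null_beyond_cell D : measurable D -> `[c, b] `&` D = set0 ->
  (tau (`[c, b] `|` D) <= M%:E)%E ->
  mass (`[c, b] `|` D) = M /\ wmass (`[c, b] `|` D) = wmass `[c, b].
Proof.
move=> mD cbD le_cbD.
have tauD0 : tau D = 0%E.
  apply/eqP; rewrite eq_le measure_ge0 andbT.
  have : (tau `[c, b] + tau D <= M%:E)%E by rewrite -measureU.
  rewrite measure_cell.
  by case: (tau D) (fin mD) => [x| |] //= _; rewrite -EFinD !lee_fin gerDl.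
split; first by rewrite mass_setU // /mass tauD0 addr0.
rewrite /wmass integral_setU //; last by rewrite disj_set2E cbD.
- by rewrite (null_set_integral _ _ tauD0) ?adde0 //; exact: alphaE_meas.
- by apply: alphaE_meas; exact: measurableU.
Qed.

Lemma Jint_mass : Jint tau c alpha M = Jat b M.
Proof.
have Jat_bE : wmass `[c, b] = Jat b M.
  have sub_co : `[c, b[ `<=` `[c, b] by apply: subset_itv; rewrite bnd_simp.
  have sub_b : [set b] `<=` `[c, b] by move=> x /= ->; rewrite in_itv /= cb lexx.
  have mco : measurable `[c, b[ by exact: measurable_itv.
  rewrite /Jat mass_itvcc // -(@setUitv1 _ _ _ _ true) ?bnd_simp //.
  rewrite wmass_setU ?setI_itvco1 ?wmass_set1 //.
  by rewrite addrAC subrr add0r mulrC.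
rewrite /Jint /atomw /Jat; case tr: (tpt M) tpt_mass_ge => [r| |] //= br;
  rewrite -/(mass _) -/(wmass _).
- have [<-|b_neq_r] := eqVneq b r; first by [].
  have {}br : b < r by rewrite lt_neqAle b_neq_r -lee_fin.
  have := measure_co_tpt_le tr; rewrite (itvco_split cb br) => null_br.
  have [-> ->] := null_beyond_cell (measurable_itv _) (setI_itv_adjacent _ _ _) null_br.
  by rewrite subrr mul0r addr0.
- have := measure_cy_tpt_le tr; rewrite (itv_bndbnd_setU (x := BRight b)) ?bnd_simp //.
  move=> null_b.
  have [_ ->] := null_beyond_cell (measurable_itv _) (setI_itv_adjacent _ _ _) null_b.
  by rewrite addr0.
Qed.

Lemma Jint_repr m : 0 <= m <= M -> exists r,
  [/\ c <= r <= b, Jint tau c alpha m = Jat r m, mass `[c, r[ <= m <= mass `[c, r]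
    & (m < M -> tpt m = r%:E) /\ (m = M -> r = b)].
Proof.
move=> /andP[m0 mM]; have [{}mM|mM'] := ltP m M; last first.
  have -> : m = M by apply/eqP; rewrite eq_le mM mM'.
  exists b; split; [by rewrite cb lexx | exact: Jint_mass | | by split => //; rewrite ltxx].
  by rewrite lexx andbT le_mass //; apply: subset_itv; rewrite bnd_simp.
have m0M : 0 <= m < M by rewrite m0.
have [r tr crb] := tpt_in_cell m0M.
exists r; split => //; first exact: Jint_Jat.
  rewrite /mass -!lee_fin !fineK ?fin ?measurable_itv //.
  by rewrite (measure_co_tpt_le tr) (measure_cc_tpt_ge tr).
by split => // mM'; move: mM; rewrite mM' ltxx.
Qed.

Lemma Jint_lipschitz m m' : 0 <= m -> m <= m' -> m' <= M ->
  0 <= Jint tau c alpha m' - Jint tau c alpha m <= m' - m.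
Proof.
move=> m0 mm' m'M.
have hm : 0 <= m <= M by rewrite m0 (le_trans mm' m'M).
have hm' : 0 <= m' <= M by rewrite (le_trans m0 mm') m'M.
have [r [/andP[cr rb] -> /andP[h1 h2] [tr _]]] := Jint_repr hm.
have [r' [/andP[cr' rb'] -> /andP[h1' h2'] [tr' r'b]]] := Jint_repr hm'.
apply: Jat_increment => //; have [m'M'|m'M'] := ltP m' M; last first.
  by rewrite r'b //; apply/eqP; rewrite eq_le m'M m'M'.
by have := le_tpt mm'; rewrite tr ?tr' ?lee_fin // (le_lt_trans mm').
Qed.

Lemma Jint0 : Jint tau c alpha 0 = 0.
Proof.
have M0 : (0 : R) <= 0 <= M by rewrite lexx fine_ge0.
have [r [/andP[cr rb] -> h _]] := Jint_repr M0.
have f0 : mass `[c, r[ = 0.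
  by apply/eqP; rewrite eq_le; case/andP: h => -> _; exact/fine_ge0/measure_ge0.
have sub : `[c, r[ `<=` `[c, b] by apply: subset_itv; rewrite bnd_simp.
have mcr : measurable `[c, r[ by exact: measurable_itv.
have g0 : wmass `[c, r[ = 0.
  by apply/eqP; rewrite eq_le wmass_ge0 // andbT -f0 wmass_le_mass.
by rewrite /Jat g0 f0 subrr mul0r addr0.
Qed.

Lemma taum_mass_cell : taum tau c M `[c, b] = tau `[c, b].
Proof.
rewrite /taum; case tr: (tpt M) tpt_mass_ge => [r| |] //= br.
- have [eq_br|b_neq_r] := eqVneq b r.
    subst r; rewrite (setIidr (subset_itvl _)) ?bnd_simp // asboolT /=; last first.
      by rewrite in_itv /= cb lexx.
    have mco : measurable `[c, b[ by exact: measurable_itv.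
    rewrite /atomw tr /= -[X in (X + _)%E]fineK ?fin //.
    by rewrite -EFinD addrCA subrr addr0 measure_cell.
  have {}br : b < r by rewrite lt_neqAle b_neq_r -lee_fin.
  rewrite (setIidl (subset_itvl _)) ?bnd_simp ?ltW // asboolF ?adde0 //=.
  by rewrite in_itv /= => /andP[_]; rewrite leNgt br.
- by rewrite adde0 (setIidl (subset_itvl _)).
Qed.

Lemma le_Jint m m' : 0 <= m -> m <= m' -> m' <= M ->
  Jint tau c alpha m <= Jint tau c alpha m'.
Proof. by move=> m0 mm' m'M; have /andP[+ _] := Jint_lipschitz m0 mm' m'M; rewrite subr_ge0. Qed.

Lemma Jint_sup_sublevel q : 0 < q ->
  let s := sup [set m | 0 <= m <= M /\ Jint tau c alpha m < q] in
  [/\ 0 <= s, s <= M, Jint tau c alpha s <= q & (s < M -> Jint tau c alpha s = q)].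
Proof. by move=> q0; apply: sup_sublevel; rewrite ?fine_ge0 ?Jint0 //; exact: Jint_lipschitz. Qed.

End Quantile.

(** * The procedure *)

Section Procedure.
Variable R : realType.
Implicit Types (s : state R) (t : seq R).

Definition wf_state s : Prop :=
  [/\ sorted <%R (st_t s), forall k, 0 <= (st_q s)`_k & (st_tau s setT < +oo)%E].

Lemma measurable_cell t k : measurable (cell t k).
Proof. by rewrite /cell; case: ifP => _; exact: measurable_itv. Qed.

Lemma cellE t k : (k.+1 < size t)%N -> cell t k = `[t`_k, t`_k.+1].
Proof. by rewrite /cell => ->. Qed.

Lemma first_cell_null s j : first_cell s j ->
  forall k, (k < j)%N -> st_tau s (cell (st_t s) k) = 0%E.
Proof.
move=> [_ [_ fc]] k kj; apply/eqP; rewrite eq_le measure_ge0 andbT leNgt.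
exact/negP/fc.
Qed.

Lemma first_cell_eq s j j' : first_cell s j' ->
  (forall k, (k < j)%N -> st_tau s (cell (st_t s) k) = 0%E) ->
  (0 < st_tau s (cell (st_t s) j))%E -> j' = j.
Proof.
move=> [_ [pos' min']] null pos.
have [jj'|j'j|//] := ltngtP j' j; first by move: pos'; rewrite null // ltxx.
by case: (min' j j'j pos).
Qed.

Lemma first_cell_ge s j p : first_cell s j ->
  (forall i, (i < p)%N -> st_tau s (cell (st_t s) i) = 0%E) -> (p <= j)%N.
Proof.
move=> [_ [pos _]] null; rewrite leqNgt; apply/negP => jp.
by move: pos; rewrite null // ltxx.
Qed.

Lemma measure_itvcc_null (tau : {measure set R -> \bar R}) t j :
  (forall k, (k < j)%N -> tau (cell t k) = 0%E) ->
  forall k, (0 < k <= j)%N -> (k < size t)%N -> tau `[t`_0, t`_k] = 0%E.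
Proof.
move=> null; elim=> [//|k IHk] /andP[_ kj] ks.
have null_k : tau `[t`_k, t`_k.+1] = 0%E by rewrite -cellE ?null.
have [k0|k0] := posnP k; first by rewrite k0 in null_k *.
have sub : `[t`_0, t`_k.+1] `<=` `[t`_0, t`_k] `|` `[t`_k, t`_k.+1].
  move=> x /=; rewrite !in_itv /= => /andP[t0x xtk1].
  by have [xtk|tkx] := leP x t`_k; [left; rewrite t0x | right; rewrite xtk1 ltW].
have m0k : measurable `[t`_0, t`_k] by exact: measurable_itv.
have mkk : measurable `[t`_k, t`_k.+1] by exact: measurable_itv.
have le_U : (tau `[t`_0, t`_k.+1] <= tau (`[t`_0, t`_k] `|` `[t`_k, t`_k.+1]))%E.
  apply: le_measure; rewrite ?inE //; by [exact: measurable_itv | exact: measurableU].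
have le_sum : (tau (`[t`_0, t`_k] `|` `[t`_k, t`_k.+1]) <=
    tau `[t`_0, t`_k] + tau `[t`_k, t`_k.+1])%E by exact: measureU2.
apply/eqP; rewrite eq_le measure_ge0 andbT; apply: (le_trans le_U).
by apply: (le_trans le_sum); rewrite IHk ?k0 ?(ltnW kj) ?(ltnW ks) // null_k adde0.
Qed.

Lemma first_cell_not_last s j : reaches4 s -> first_cell s j ->
  (1 < size (st_t s))%N -> (j.+1 < size (st_t s))%N.
Proof.
move=> [_ [_ cover_pos]] fc sz1; have [jsz _] := fc.
rewrite ltn_neqAle jsz andbT; apply/negP => /eqP ej.
have j0 : (0 < j)%N by rewrite -ltnS ej.
move/eqP: cover_pos; apply; rewrite -ej /=.
by apply: (measure_itvcc_null (first_cell_null fc)); rewrite ?j0 ?leqnn.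
Qed.

Lemma subseq_rem_at i t : subseq (rem_at i t) t.
Proof.
rewrite /rem_at -[X in subseq _ X](cat_take_drop i t) cat_subseq //.
by rewrite -add1n -drop_drop drop_subseq.
Qed.

Lemma size_rem_at i t : (i < size t)%N -> size (rem_at i t) = (size t).-1.
Proof. by move=> it; rewrite /rem_at size_cat size_take size_drop it; lia. Qed.

Lemma wf_state_behead s : wf_state s ->
  wf_state (State (behead (st_q s)) (behead (st_t s)) (st_tau s)).
Proof.
case=> t_sorted q_ge0 tau_fin; split => //= [|k]; last by rewrite nth_behead.
by case: (st_t s) t_sorted => //= x t; exact: path_sorted.
Qed.

Lemma wf_state_rem_at s i : wf_state s ->
  wf_state (State (rem_at i (st_q s)) (rem_at i (st_t s)) (st_tau s)).
Proof.
case=> t_sorted q_ge0 tau_fin; split => //=.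
  exact: (subseq_sorted lt_trans (subseq_rem_at i _) t_sorted).
move=> k; have [kq|kq] := ltnP k (size (rem_at i (st_q s))); last by rewrite nth_default.
have /nthP := mem_subseq (subseq_rem_at i _) (mem_nth 0 kq).
by move=> /(_ 0) [k' _ <-].
Qed.

Lemma alpha1_in01 (a b c : R) : a <= c -> c < b ->
  forall x, c <= x <= b -> 0 <= alpha1 a b x <= 1.
Proof.
move=> ac cb x /andP[cx xb]; have ab : 0 < b - a by rewrite subr_gt0 (le_lt_trans ac cb).
by rewrite /alpha1 divr_ge0 ?ler_pdivrMr ?mul1r /=; lra.
Qed.

Lemma alphan1_in01 (a b c : R) : a <= c -> c < b ->
  forall x, c <= x <= b -> 0 <= alphan1 a b x <= 1.
Proof.
move=> ac cb x /andP[cx xb]; have ab : 0 < b - a by rewrite subr_gt0 (le_lt_trans ac cb).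
by rewrite /alphan1 divr_ge0 ?ler_pdivrMr ?mul1r /=; lra.
Qed.

Lemma measurable_alpha1 (a b : R) : measurable_fun setT (alpha1 a b).
Proof. by apply: measurable_funM => //; exact: measurable_funB. Qed.

Lemma measurable_alphan1 (a b : R) : measurable_fun setT (alphan1 a b).
Proof. by apply: measurable_funM => //; exact: measurable_funB. Qed.

End Procedure.

Section Step4c.
Variable R : realType.
Implicit Types (s : state R).

Definition step4c_call s j (tau' : {measure set R -> \bar R}) : Prop :=
  [/\ first_cell s j, (st_q s)`_0 != 0,
    ~ ((st_q s)`_j.+1 = 0 /\ (1 < size (st_t s))%N), (j.+1 < size (st_t s))%N &
    forall A, measurable A ->
      tau' A = (st_tau s A - taum (st_tau s) (st_t s)`_j (Mmin s j) A)%E].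

Lemma nth_q4c s j k : (q4c s j)`_k =
  if k == j.+1 then (st_q s)`_j.+1 - Jn1 s j (Mmin s j)
  else if k == 0%N then (st_q s)`_0 - J1 s j (Mmin s j) else (st_q s)`_k.
Proof. by rewrite /q4c /= !nth_set_nth /= nth_set_nth /=. Qed.

Variables (s : state R) (j : nat) (tau' : {measure set R -> \bar R}).
Hypotheses (wf_s : wf_state s) (call : step4c_call s j tau').
Local Notation q := (st_q s).
Local Notation t := (st_t s).
Local Notation tau := (st_tau s).

Let jsz : (j.+1 < size t)%N. Proof. by case: call. Qed.
Let tau_fin : (tau setT < +oo)%E. Proof. by case: wf_s. Qed.
Let tau'E A : measurable A -> tau' A = (tau A - taum tau t`_j (Mmin s j) A)%E.
Proof. by case: call => _ _ _ _; apply. Qed.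

Let jt : (j < size t)%N := ltn_trans (ltnSn j) jsz.

Let t0_le_tj : t`_0 <= t`_j.
Proof.
case: wf_s => t_sorted _ _; have t0 : (0 < size t)%N := leq_ltn_trans (leq0n j) jt.
by rewrite (lt_sorted_leq_nth 0 t_sorted) ?inE.
Qed.

Let tj_lt_tj1 : t`_j < t`_j.+1.
Proof. by case: wf_s => t_sorted _ _; rewrite (lt_sorted_ltn_nth 0 t_sorted) ?inE. Qed.

Let q0_gt0 : 0 < q`_0.
Proof. by case: call => _ q0 _ _ _; case: wf_s => _ q_ge0 _; rewrite lt0r q0 q_ge0. Qed.

Let qj1_gt0 : 0 < q`_j.+1.
Proof.
case: call => _ _ qj1 _ _; case: wf_s => _ q_ge0 _; rewrite lt0r q_ge0 andbT.
by apply/negP => /eqP qj1_0; apply: qj1; split => //; lia.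
Qed.

Let cellj : cell t j = `[t`_j, t`_j.+1]. Proof. exact: cellE. Qed.

Lemma Mmin_spec : [/\ 0 <= Mmin s j <= Mtot s j,
  J1 s j (Mmin s j) <= q`_0, Jn1 s j (Mmin s j) <= q`_j.+1 &
  [\/ Mmin s j = Mtot s j, J1 s j (Mmin s j) = q`_0 | Jn1 s j (Mmin s j) = q`_j.+1]].
Proof.
have MtotE : Mtot s j = mass tau `[t`_j, t`_j.+1] by rewrite /Mtot cellj.
have a1 := alpha1_in01 t0_le_tj tj_lt_tj1.
have an1 := alphan1_in01 t0_le_tj tj_lt_tj1.
have tj_le_tj1 := ltW tj_lt_tj1.
have J1_mono := le_Jint tau_fin (measurable_alpha1 _ _) a1 tj_le_tj1.
have Jn1_mono := le_Jint tau_fin (measurable_alphan1 _ _) an1 tj_le_tj1.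
rewrite -MtotE in J1_mono Jn1_mono.
have [] := Jint_sup_sublevel tau_fin (measurable_alpha1 _ _) a1 tj_le_tj1 q0_gt0.
have [] := Jint_sup_sublevel tau_fin (measurable_alphan1 _ _) an1 tj_le_tj1 qj1_gt0.
rewrite -MtotE -/(M1 s j) -/(Mn1 s j) /Mmin.
set m1 := M1 s j; set m2 := Mn1 s j => m20 m2M Jn1_m2 Jn1_eq m10 m1M J1_m1 J1_eq.
have [m1_le_m2|m2_lt_m1] := leP m1 m2.
  rewrite m10 m1M J1_m1 (le_trans (Jn1_mono _ _ m10 m1_le_m2 m2M) Jn1_m2).
  have [m1_lt_M|M_le_m1] := ltP m1 (Mtot s j); first by split => //; apply: Or32; exact: J1_eq.
  by split => //; apply: Or31; apply/eqP; rewrite eq_le m1M.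
rewrite m20 m2M Jn1_m2 (le_trans (J1_mono _ _ m20 (ltW m2_lt_m1) m1M) J1_m1).
by split => //; apply: Or33; apply: Jn1_eq; exact: lt_le_trans m2_lt_m1 m1M.
Qed.

Lemma wf_state_q4c : wf_state (State (q4c s j) t tau').
Proof.
have [_ J1le Jn1le _] := Mmin_spec; case: wf_s => t_sorted q_ge0 _.
split => //= [k|].
  by rewrite nth_q4c; case: ifP => _; [|case: ifP => _]; rewrite ?subr_ge0.
have : (tau setT - taum tau t`_j (Mmin s j) setT)%E \is a fin_num.
  by rewrite fin_numB measure_fin_num ?taum_fin_num.
by rewrite -tau'E // => /fin_numPlt /andP[].
Qed.

Lemma q4c_cells_before_null k : (k < j)%N -> tau' (cell t k) = 0%E.
Proof.
move=> kj; have [fc _ _ _ _] := call; have mk := measurable_cell t k.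
have tau'_k : tau' (cell t k) = (- taum tau t`_j (Mmin s j) (cell t k))%E.
  by rewrite tau'E // (first_cell_null fc) // sub0e.
have taum_ge0_k := taum_ge0 t`_j tau_fin (Mmin s j) mk.
have : (0 <= tau' (cell t k))%E by exact: measure_ge0.
rewrite tau'_k oppe_ge0 => taum_le0_k.
by apply/eqP; rewrite eqe_oppLR oppe0 eq_le taum_le0_k taum_ge0_k.
Qed.

Lemma q4c_progress :
  [\/ tau' (cell t j) = 0%E, (q4c s j)`_0 = 0 | (q4c s j)`_j.+1 = 0].
Proof.
have [_ _ _ [MminE|J1E|Jn1E]] := Mmin_spec.
- have mj := measurable_cell t j.
  apply: Or31; rewrite tau'E // MminE /Mtot cellj.
  by rewrite taum_mass_cell ?subee ?measure_fin_num //; exact: ltW.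
- by apply: Or32; rewrite nth_q4c /= J1E subrr.
- by apply: Or33; rewrite nth_q4c eqxx Jn1E subrr.
Qed.

End Step4c.

Section Termination.
Variable R : realType.
Implicit Types (s : state R).

Lemma Call_wf s s' : wf_state s -> Call s s' -> wf_state s'.
Proof.
move=> wf_s [j _ _ _|j _ _ _ _ _|j tau' _ fc q0 qj1 jsz tau'E].
- exact: wf_state_behead.
- exact: wf_state_rem_at.
- exact: wf_state_q4c wf_s (And5 fc q0 qj1 jsz tau'E).
Qed.

Lemma Call_inv s s' : Call s s' -> (size (st_t s') < size (st_t s))%N \/
  exists j tau', step4c_call s j tau' /\ s' = State (q4c s j) (st_t s) tau'.
Proof.
case=> [j [t0 _] _ _|j R4 fc _ _ t1|j tau' _ fc q0 qj1 jsz tau'E].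
- by left; rewrite /= size_behead ltn_predL.
- left; have [t0 _] := R4.
  by rewrite /= size_rem_at ?ltn_predL // (first_cell_not_last R4 fc t1).
- by right; exists j, tau'; split.
Qed.

Variable n : nat.
Hypothesis terminates_smaller :
  forall s, (size (st_t s) < n)%N -> wf_state s -> terminates s.

Lemma terminates_of_4c s : (size (st_t s) <= n)%N -> wf_state s ->
  (forall j tau', step4c_call s j tau' -> terminates (State (q4c s j) (st_t s) tau')) ->
  terminates s.
Proof.
move=> sz wf_s term4c; constructor => s' call.
have [lt|[j [tau' [c4 ->]]]] := Call_inv call; last exact: term4c.
by apply: terminates_smaller; [exact: leq_trans lt sz | exact: Call_wf call].
Qed.

(* If a call (4c) leaves mass on the first charged cell, it has exhausted q_1 or q_(n+1),
   and that cell is still the first charged one, so the next call is (4a) or (4b). *)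
Lemma terminates_after_4c s j tau' : (size (st_t s) <= n)%N -> wf_state s ->
  step4c_call s j tau' -> tau' (cell (st_t s) j) != 0%E ->
  terminates (State (q4c s j) (st_t s) tau').
Proof.
move=> sz wf_s c4 pos; have [_ _ _ jsz _] := c4.
apply: (terminates_of_4c (s := State _ _ _) sz (wf_state_q4c wf_s c4)).
move=> j' tau'' [fc' q0' qj1' _ _].
have jj' : j' = j.
  apply: first_cell_eq fc' (q4c_cells_before_null wf_s c4) _.
  by rewrite lt0e pos measure_ge0.
exfalso; subst j'; have [/eqP|q0|qj1] := q4c_progress wf_s c4.
- by rewrite (negPf pos).
- by rewrite q0 eqxx in q0'.
- by apply: qj1'; split => //=; lia.
Qed.

Lemma terminates_null_prefix k : forall p s, (n <= p + k)%N ->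
  (size (st_t s) <= n)%N -> wf_state s ->
  (forall i, (i < p)%N -> st_tau s (cell (st_t s) i) = 0%E) -> terminates s.
Proof.
elim: k => [|k IHk] p s npk sz wf_s null; apply: (terminates_of_4c sz wf_s) => j tau' c4;
  have [fc _ _ jsz _] := c4; have pj := first_cell_ge fc null.
  by exfalso; lia.
have [null_j|pos] := eqVneq (tau' (cell (st_t s) j)) 0%E; last exact: terminates_after_4c.
apply: (IHk j.+1) => /=; [lia | exact: sz | exact: wf_state_q4c wf_s c4 |].
move=> i; rewrite ltnS leq_eqVlt => /orP[/eqP->//|]; exact: q4c_cells_before_null.
Qed.

End Termination.

Lemma wf_state_terminates (R : realType) (s : state R) : wf_state s -> terminates s.
Proof.
have [n] := ubnP (size (st_t s)); elim: n s => [s|n IHn s /ltnSE sz wf_s]; first by [].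
exact: (terminates_null_prefix IHn (k := n) (p := 0)).
Qed.

Theorem proposition3 (R : realType) (q t : seq R)
    (tau : {measure set R -> \bar R})
    (d : measure_display) (I : measurableType d)
    (di : {measure set I -> \bar R}) (T : I -> R) :
  size q = size t ->
  sorted <%R t ->
  all (fun x => 0 <= x) q ->
  (* (T : I -> [t_1, t_N]) is an offer profile subject to (q, t) *)
  di setT = (\sum_(x <- q) x)%:E ->
  measurable_fun setT T ->
  (forall i, t`_0 <= T i <= t`_(size t).-1) ->
  (\int[di]_(i in setT) (T i)%:E)%E = (\sum_(k < size t) q`_k * t`_k)%:E ->
  (* tau is its distribution *)
  (forall A, measurable A -> tau A = di (T @^-1` A)) ->
  terminates (State q t tau).
Proof.
move=> _ t_sorted q_ge0 di_setT _ _ _ tau_di.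
apply: wf_state_terminates; split => //= [k|].
  by have [kq|kq] := ltnP k (size q); [exact: (all_nthP 0 q_ge0) | rewrite nth_default].
by rewrite tau_di // preimage_setT di_setT ltry.
Qed.
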